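(* Under the setting and assumptions in the context, let $N_H=E[Y\mid Z=1]-E[Y\mid Z=0]$ and suppose $N_H\ge 0$ and $\max_z\Pr(Y=1\mid Z=z)-\min_z\Pr(Y=1\mid Z=z)>0$. Then $\Pr(H)>0$ and $$\frac{N_H}{1-\max_z\Pr(Y=0,R=1\mid Z=z)-\max_z\Pr(Y=1,R=0\mid Z=z)}\ \le\ APCE_H\ \le\ \frac{N_H}{\max_z\Pr(Y=1\mid Z=z)-\min_z\Pr(Y=1\mid Z=z)},$$ where all maxima and minima are over $z\in\{0,1\}$.
   Context: Units are drawn from a population (a probability space). Each unit has a binary assignment $Z\in\{0,1\}$ with $0<\Pr(Z=1)<1$, binary potential recommendations $R(0),R(1)\in\{0,1\}$, and binary potential outcomes $Y(0),Y(1)\in\{0,1\}$ indexed by the recommendation only (exclusion restriction). Observed quantities are $R=R(Z)$ and $Y=Y(R(Z))$. Assumptions: (Randomization) $Z$ is independent of $(R(0),R(1),Y(0),Y(1))$; (Monotonicity) $Y(1)\ge Y(0)$ almost surely. Helpable stratum $H=\{Y(0)=0,Y(1)=1\}$; $APCE_H=E[R(1)-R(0)\mid H]$. *)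

From HB Require Import structures.
From mathcomp Require Import all_boot all_order all_algebra.
From mathcomp Require Import all_classical all_reals all_analysis.
Set Implicit Arguments. Unset Strict Implicit. Unset Printing Implicit Defensive.
Import Order.TTheory GRing.Theory Num.Theory.
Local Open Scope classical_set_scope.
Local Open Scope ring_scope.

Section Defs.
Context {d : measure_display} {T : measurableType d} {R : realType}.

Definition pr (P : probability T R) (A : set T) : R := fine (P A).

Definition cpr (P : probability T R) (A B : set T) : R :=
  pr P (A `&` B) / pr P B.

Definition ev (X : T -> bool) (b : bool) : set T := [set t | X t = b].

(* observed recommendation R = R(Z) and observed outcome Y = Y(R(Z)) *)
Definition Robs (Z R0 R1 : T -> bool) : T -> bool :=
  fun t => if Z t then R1 t else R0 t.
Definition Yobs (Z R0 R1 Y0 Y1 : T -> bool) : T -> bool :=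
  fun t => if Robs Z R0 R1 t then Y1 t else Y0 t.

Definition helpable (Y0 Y1 : T -> bool) : set T := ev Y0 false `&` ev Y1 true.

(* independence of Z and the vector V = (R(0),R(1),Y(0),Y(1)) (discrete
   random variables: product rule for all preimage events) *)
Definition indep_Z_V (P : probability T R) (Z : T -> bool)
  (V : T -> bool * bool * bool * bool) : Prop :=
  forall (A : set bool) (B : set (bool * bool * bool * bool)),
    P (Z @^-1` A `&` V @^-1` B) = (P (Z @^-1` A) * P (V @^-1` B))%E.

(* E[Y | Z = z] for binary Y: expectation of the indicator = Pr(Y=1 | Z=z) *)
Definition condE_bin (P : probability T R) (Y : T -> bool) (B : set T) : R :=
  cpr P (ev Y true) B.

(* E[R(1) - R(0) | H] = E[R(1)|H] - E[R(0)|H] *)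
Definition APCE_H (P : probability T R) (R0 R1 Y0 Y1 : T -> bool) : R :=
  condE_bin P R1 (helpable Y0 Y1) - condE_bin P R0 (helpable Y0 Y1).

End Defs.

(* Randomization turns every observed event given {Z = z} into an event about
   the principal stratum (R(0), R(1), Y(0), Y(1)), and monotonicity makes the
   strata with Y(0) = 1, Y(1) = 0 null.  On the remaining strata
   Y(R(1)) - Y(R(0)) = 1[R(1) = 1, H] - 1[R(0) = 1, H], hence N_H = Pr(H) APCE_H.
   Thus N_H <= Pr(H), i.e. APCE_H <= 1 = N_H / (max - min).  For the lower bound,
   Pr(Y = 0, R = 1 | Z = z) <= Pr(Y(0) = Y(1) = 0) and
   Pr(Y = 1, R = 0 | Z = z) <= Pr(Y(0) = Y(1) = 1), and these two strata together
   with H carry all the mass, so Pr(H) <= 1 - max q01 - max q10. *)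

From HB Require Import structures.
From mathcomp Require Import all_boot all_order all_algebra.
From mathcomp Require Import all_classical all_reals all_analysis.
From mathcomp Require Import lra.

Set Implicit Arguments.
Unset Strict Implicit.
Unset Printing Implicit Defensive.
Import Order.TTheory GRing.Theory Num.Theory.
Local Open Scope classical_set_scope.
Local Open Scope ring_scope.

Section finite_law.
Context d (T : measurableType d) (R : realType) (P : probability T R).

Lemma pr_ge0 (A : set T) : 0 <= pr P A.
Proof. exact/fine_ge0/measure_ge0. Qed.

Lemma pr_setT : pr P setT = 1.
Proof. by rewrite /pr probability_setT. Qed.

Lemma pr_setU (A B : set T) : measurable A -> measurable B ->
  A `&` B = set0 -> pr P (A `|` B) = pr P A + pr P B.
Proof.
move=> mA mB AB0; rewrite /pr measureU// fineD//; exact: fin_num_measure.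
Qed.

Lemma measurable_ev (X : T -> bool) b :
  measurable (ev X true) -> measurable (ev X b).
Proof.
case: b => // mX; rewrite (_ : ev X false = ~` ev X true); first exact: measurableC.
by apply/seteqP; split=> t; rewrite /ev /=; case: (X t).
Qed.

Lemma pr_ev_false (X : T -> bool) :
  measurable (ev X true) -> pr P (ev X false) = 1 - pr P (ev X true).
Proof.
move=> mX; rewrite -pr_setT (_ : setT = ev X true `|` ev X false).
  rewrite pr_setU//; first by rewrite addrAC subrr add0r.
    exact: measurable_ev.
  by apply/seteqP; split=> t //= -[]; rewrite /ev /= => ->.
by apply/seteqP; split=> t //= _; rewrite /ev /=; case: (X t); [left|right].
Qed.

Variables (S : finType) (V : T -> S).
Hypothesis mV : forall v, measurable (V @^-1` [set v]).

Definition law (v : S) : R := pr P (V @^-1` [set v]).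

Definition Elaw (f : S -> R) : R := \sum_v law v * f v.

Lemma law_ge0 v : 0 <= law v.
Proof. exact: pr_ge0. Qed.

Lemma measurable_preimage_seq (r : seq S) :
  measurable (V @^-1` [set v | v \in r]).
Proof.
elim: r => [|x r IHr].
  by rewrite (_ : _ @^-1` _ = set0) //; apply/seteqP; split.
rewrite (_ : _ @^-1` _ = V @^-1` [set x] `|` V @^-1` [set v | v \in r]).
  exact: measurableU.
apply/seteqP; split=> t /=; rewrite inE; first by case/orP=> [/eqP|]; auto.
by case=> [->|->]; rewrite ?eqxx ?orbT.
Qed.

Lemma pr_preimage_seq (r : seq S) : uniq r ->
  pr P (V @^-1` [set v | v \in r]) = \sum_(v <- r) law v.
Proof.
elim: r => [_|x r IHr /= /andP[xr ur]].
  by rewrite big_nil (_ : _ @^-1` _ = set0) ?/pr ?measure0//; apply/seteqP; split.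
rewrite big_cons -IHr// -pr_setU//.
- congr pr; apply/seteqP; split=> t /=; rewrite inE; first by case/orP=> [/eqP|]; auto.
  by case=> [->|->]; rewrite ?eqxx ?orbT.
- exact: measurable_preimage_seq.
- by apply/seteqP; split=> t //= -[->]; apply/negP.
Qed.

Lemma preimage_pred_enum (h : pred S) :
  V @^-1` [set v | h v] = V @^-1` [set v | v \in enum h].
Proof. by apply/seteqP; split=> t /=; rewrite mem_enum. Qed.

Lemma measurable_preimage (h : pred S) : measurable (V @^-1` [set v | h v]).
Proof. rewrite preimage_pred_enum; exact: measurable_preimage_seq. Qed.

Lemma pr_preimage (h : pred S) :
  pr P (V @^-1` [set v | h v]) = Elaw (fun v => (h v)%:R).
Proof.
rewrite preimage_pred_enum pr_preimage_seq ?enum_uniq// big_enum /Elaw.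
rewrite big_mkcond; apply: eq_bigr => v _.
by rewrite unfold_in; case: (h v); rewrite ?mulr1 ?mulr0.
Qed.

Lemma Elaw1 : Elaw (fun=> 1) = 1.
Proof.
rewrite -[RHS]pr_setT (_ : Elaw _ = Elaw (fun v => (predT v)%:R))// -pr_preimage.
by congr pr; apply/seteqP.
Qed.

Lemma ElawD f g : Elaw f + Elaw g = Elaw (f \+ g).
Proof. by rewrite /Elaw -big_split; apply: eq_bigr => v _; rewrite mulrDr. Qed.

Lemma ElawB f g : Elaw f - Elaw g = Elaw (f \- g).
Proof. by rewrite /Elaw -sumrB; apply: eq_bigr => v _; rewrite mulrBr. Qed.

Lemma ler_Elaw f g : (forall v, law v != 0 -> f v <= g v) -> Elaw f <= Elaw g.
Proof.
move=> fg; apply: ler_sum => v _; have [->|/fg] := eqVneq (law v) 0.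
  by rewrite !mul0r.
exact/ler_wpM2l/law_ge0.
Qed.

Lemma eq_Elaw f g : (forall v, law v != 0 -> f v = g v) -> Elaw f = Elaw g.
Proof. by move=> fg; apply/le_anti/andP; split; apply: ler_Elaw => v /fg ->. Qed.

End finite_law.

(* A stratum is the value of (R(0), R(1), Y(0), Y(1)). *)
Notation stratum := (bool * bool * bool * bool)%type.

Definition rec (z : bool) (v : stratum) : bool :=
  let: (r0, r1, _, _) := v in if z then r1 else r0.
Definition out (z : bool) (v : stratum) : bool :=
  let: (_, _, y0, y1) := v in if rec z v then y1 else y0.
Definition helped (v : stratum) : bool := let: (_, _, y0, y1) := v in ~~ y0 && y1.
Definition never (v : stratum) : bool := let: (_, _, y0, y1) := v in ~~ y0 && ~~ y1.
Definition always (v : stratum) : bool := let: (_, _, y0, y1) := v in y0 && y1.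
Definition monotone (v : stratum) : bool := let: (_, _, y0, y1) := v in y0 ==> y1.

Section strata.
Context d (T : measurableType d) (R : realType) (P : probability T R).
Variables R0 R1 Y0 Y1 : T -> bool.
Hypotheses (mR0 : measurable (ev R0 true)) (mR1 : measurable (ev R1 true))
  (mY0 : measurable (ev Y0 true)) (mY1 : measurable (ev Y1 true)).

Definition strata (t : T) : stratum := (R0 t, R1 t, Y0 t, Y1 t).

Lemma measurable_strata_fiber v : measurable (strata @^-1` [set v]).
Proof.
case: v => [[[a b] c] e].
rewrite (_ : _ @^-1` _ = ev R0 a `&` ev R1 b `&` ev Y0 c `&` ev Y1 e).
  by do !apply: measurableI; exact: measurable_ev.
apply/seteqP; split=> t; rewrite /ev /strata /=; first by case=> -> -> -> ->.
by case=> [[[-> ->] ->] ->].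
Qed.

Definition pr_strata (h : pred stratum) : R := pr P (strata @^-1` [set v | h v]).

Lemma pr_strataE h : pr_strata h = Elaw P strata (fun v => (h v)%:R).
Proof. exact/pr_preimage/measurable_strata_fiber. Qed.

Hypothesis mono : P [set t | Y0 t = true /\ Y1 t = false] = 0%E.

Lemma law_strata_monotone v : law P strata v != 0 -> monotone v.
Proof.
case: v => [[[a b] []] []] //; apply: contraNT => _; apply/eqP.
rewrite /law /pr.
rewrite (@subset_measure0 _ _ _ P _ [set t | Y0 t = true /\ Y1 t = false]) //.
- exact: measurable_strata_fiber.
- rewrite (_ : [set t | _] = ev Y0 true `&` ev Y1 false) //.
  by apply: measurableI; exact: measurable_ev.
- by move=> t; rewrite /strata /= => -[_ _ -> ->].
Qed.

Lemma ler_pr_strata (h g : pred stratum) :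
  (forall v, monotone v -> h v -> g v) -> pr_strata h <= pr_strata g.
Proof.
move=> hg; rewrite !pr_strataE; apply: ler_Elaw => v /law_strata_monotone/hg.
by case: (h v) => [->|]; rewrite ?ler_nat.
Qed.

Lemma pr_never_always_helped :
  pr_strata never + pr_strata always + pr_strata helped = 1.
Proof.
rewrite !pr_strataE !ElawD -[RHS](Elaw1 P measurable_strata_fiber).
apply: eq_Elaw => -[[[a b] c] e] /law_strata_monotone /=.
by case: a b c e => [] [] [] [] //= _; lra.
Qed.

Definition helped_rec (z : bool) (v : stratum) : bool := rec z v && helped v.

Lemma pr_out_sub :
  pr_strata (out true) - pr_strata (out false) =
  pr_strata (helped_rec true) - pr_strata (helped_rec false).
Proof.
rewrite !pr_strataE !ElawB; apply: eq_Elaw => -[[[a b] c] e] /law_strata_monotone /=.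
by case: a b c e => [] [] [] [] //= _; lra.
Qed.

Lemma pr_helped_rec_sub_le :
  pr_strata (helped_rec true) - pr_strata (helped_rec false) <= pr_strata helped.
Proof.
rewrite !pr_strataE ElawB; apply: ler_Elaw => -[[[a b] c] e] _ /=.
by case: a b c e => [] [] [] [] /=; lra.
Qed.

Lemma helpable_strata : helpable Y0 Y1 = strata @^-1` [set v | helped v].
Proof.
apply/seteqP; split=> t; rewrite /helpable /ev /strata /=; first by case=> -> ->.
by case: (Y0 t) (Y1 t) => [] [].
Qed.

Lemma rec_helpable_strata z : ev (if z then R1 else R0) true `&` helpable Y0 Y1 =
  strata @^-1` [set v | helped_rec z v].
Proof.
apply/seteqP; split=> t; rewrite /helpable /ev /strata /helped_rec /=; case: z => /=;
  by case: (R0 t) (R1 t) (Y0 t) (Y1 t) => [] [] [] [] /=; intuition congruence.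
Qed.

Lemma APCE_H_strata : APCE_H P R0 R1 Y0 Y1 =
  (pr_strata (helped_rec true) - pr_strata (helped_rec false)) / pr_strata helped.
Proof.
rewrite /APCE_H /condE_bin /cpr mulrBl.
by rewrite (rec_helpable_strata true) (rec_helpable_strata false) helpable_strata.
Qed.

Section observed.
Variable Z : T -> bool.
Hypotheses (mZ : measurable (ev Z true)) (indep : indep_Z_V P Z strata).

Let Y := Yobs Z R0 R1 Y0 Y1.
Let Ro := Robs Z R0 R1.

Lemma cpr_indep (A : set T) (h : pred stratum) z : 0 < pr P (ev Z z) ->
  A `&` ev Z z = ev Z z `&` strata @^-1` [set v | h v] ->
  cpr P A (ev Z z) = pr_strata h.
Proof.
move=> pZ AZ; rewrite /cpr AZ /pr -[ev Z z]/(Z @^-1` [set z]) indep.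
rewrite fineM ?fin_num_measure//.
- by rewrite mulrAC divff ?mul1r//; exact: lt0r_neq0.
- exact: measurable_ev.
- exact/measurable_preimage/measurable_strata_fiber.
Qed.

Lemma cpr_obs z (g : bool -> bool -> bool) : 0 < pr P (ev Z z) ->
  cpr P [set t | g (Y t) (Ro t)] (ev Z z) =
  pr_strata (fun v => g (out z v) (rec z v)).
Proof.
move=> pZ; apply: cpr_indep => //.
by apply/seteqP; split=> t /=; rewrite /ev /= => -[]; [move=> + <- | move=> <-].
Qed.

Lemma cpr_Y_strata z : 0 < pr P (ev Z z) ->
  cpr P (ev Y true) (ev Z z) = pr_strata (out z).
Proof. exact: (cpr_obs (fun y _ => y)). Qed.

Lemma cpr_Y0_R1_le_never z : 0 < pr P (ev Z z) ->
  cpr P (ev Y false `&` ev Ro true) (ev Z z) <= pr_strata never.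
Proof.
move=> pZ; rewrite (_ : _ `&` _ = [set t | ~~ Y t && Ro t]); last first.
  by apply/seteqP; split=> t; rewrite /ev /=; case: (Y t) (Ro t) => [] []; intuition.
rewrite (cpr_obs (fun y r => ~~ y && r) pZ); apply: ler_pr_strata => -[[[a b] c] e].
by case: {pZ} z a b c e => [] [] [] [] [].
Qed.

Lemma cpr_Y1_R0_le_always z : 0 < pr P (ev Z z) ->
  cpr P (ev Y true `&` ev Ro false) (ev Z z) <= pr_strata always.
Proof.
move=> pZ; rewrite (_ : _ `&` _ = [set t | Y t && ~~ Ro t]); last first.
  by apply/seteqP; split=> t; rewrite /ev /=; case: (Y t) (Ro t) => [] []; intuition.
rewrite (cpr_obs (fun y r => y && ~~ r) pZ); apply: ler_pr_strata => -[[[a b] c] e].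
by case: {pZ} z a b c e => [] [] [] [] [].
Qed.

End observed.

End strata.

Theorem mainTheorem6 (d : measure_display) (T : measurableType d)
  (R : realType) (P : probability T R) (Z R0 R1 Y0 Y1 : T -> bool) :
  measurable (ev Z true) -> measurable (ev R0 true) ->
  measurable (ev R1 true) -> measurable (ev Y0 true) ->
  measurable (ev Y1 true) ->
  0 < pr P (ev Z true) < 1 ->
  indep_Z_V P Z (fun t => (R0 t, R1 t, Y0 t, Y1 t)) ->
  P [set t | Y0 t = true /\ Y1 t = false] = 0%E ->
  let Y := Yobs Z R0 R1 Y0 Y1 in
  let Ro := Robs Z R0 R1 in
  let NH := condE_bin P Y (ev Z true) - condE_bin P Y (ev Z false) in
  let p1 := fun z => cpr P (ev Y true) (ev Z z) in
  let q01 := fun z => cpr P (ev Y false `&` ev Ro true) (ev Z z) in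
  let q10 := fun z => cpr P (ev Y true `&` ev Ro false) (ev Z z) in
  0 <= NH ->
  0 < Num.max (p1 true) (p1 false) - Num.min (p1 true) (p1 false) ->
  0 < pr P (helpable Y0 Y1) /\
  NH / (1 - Num.max (q01 true) (q01 false) - Num.max (q10 true) (q10 false))
    <= APCE_H P R0 R1 Y0 Y1 /\
  APCE_H P R0 R1 Y0 Y1
    <= NH / (Num.max (p1 true) (p1 false) - Num.min (p1 true) (p1 false)).
Proof.
move=> mZ mR0 mR1 mY0 mY1 /andP[pZ1_gt0 pZ1_lt1] indep mono Y Ro NH p1 q01 q10.
move=> NH_ge0 gap.
have pZ z : 0 < pr P (ev Z z) by case: z; rewrite ?pr_ev_false//; lra.
set pr_S := pr_strata P R0 R1 Y0 Y1.
have NHE : NH = pr_S (helped_rec true) - pr_S (helped_rec false).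
  by rewrite /NH /condE_bin !(cpr_Y_strata mR0 mR1 mY0 mY1 mZ indep) // pr_out_sub.
have p1_le : p1 false <= p1 true by rewrite -subr_ge0.
rewrite (max_idPl p1_le) (min_idPr p1_le) -/NH in gap *.
have NH_le_H : NH <= pr_S helped by rewrite NHE; exact: pr_helped_rec_sub_le.
have H_gt0 : 0 < pr_S helped by exact: lt_le_trans NH_le_H.
have H_le : pr_S helped <=
    1 - Num.max (q01 true) (q01 false) - Num.max (q10 true) (q10 false).
  have q01_le z : q01 z <= pr_S never.
    exact: (cpr_Y0_R1_le_never mR0 mR1 mY0 mY1 mono mZ indep (pZ z)).
  have q10_le z : q10 z <= pr_S always.
    exact: (cpr_Y1_R0_le_always mR0 mR1 mY0 mY1 mono mZ indep (pZ z)).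
  have := pr_never_always_helped mR0 mR1 mY0 mY1 mono.
  have : Num.max (q01 true) (q01 false) <= pr_S never by rewrite ge_max !q01_le.
  have : Num.max (q10 true) (q10 false) <= pr_S always by rewrite ge_max !q10_le.
  rewrite -/pr_S; lra.
have -> : pr P (helpable Y0 Y1) = pr_S helped.
  by rewrite /pr_S /pr_strata (helpable_strata R0 R1).
rewrite APCE_H_strata -/pr_S -NHE; split=> //; split.
- by rewrite ler_wpM2l// lef_pV2 ?posrE//; lra.
- by rewrite divff ?gt_eqF// ler_pdivrMr// mul1r.
Qed.
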